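(* In the setting below, assume $\int_{\bar B_R}|\eta|\,d\mu<\infty$, $\mu(\{x\})=0$ and $\int_{\bar B_r}|\eta-\eta(x)|\,d\mu>0$ for all $r>0$. Then $x$ is a Lebesgue point for $\eta$ with respect to $\mu$ if and only if there exist $\alpha\in(0,1)$ and an $\alpha$-sequence $(r_m)_{m\ge m_1}$ at $x$ such that $x$ is a Lebesgue point along $(r_m)_{m\ge m_1}$.
   Context: Let $(\mathcal{X},d)$ be a metric space with Borel $\sigma$-algebra, $\eta:\mathcal{X}\to\mathbb{R}$ measurable, and $\mu$ a Borel measure on $\mathcal{X}$. Fix $x\in\mathcal{X}$ with $\mu(\bar B_r)>0$ for all $r>0$, where $\bar B_r=\{x':d(x,x')\le r\}$, and fix $R>0$ with $\mu(\bar B_R)<\infty$. The point $x$ is a Lebesgue point for $\eta$ with respect to $\mu$ if $\frac{1}{\mu(\bar B_r)}\int_{\bar B_r}|\eta-\eta(x)|\,d\mu\to0$ as $r\to0^+$; for a sequence of strictly positive numbers $\rho_m\to0$, $x$ is a Lebesgue point along $(\rho_m)$ if $\frac{1}{\mu(\bar B_{\rho_m})}\int_{\bar B_{\rho_m}}|\eta-\eta(x)|\,d\mu\to0$ as $m\to\infty$. For $\alpha\in(0,1)$ and $r>0$ let $M(r)=\big(\int_{\bar B_r}|\eta-\eta(x)|\,d\mu\big)^{\alpha}\big(\mu(\bar B_r)\big)^{1-\alpha}$; choose $R_1\in(0,R)$ with $M(R_1)<M(R)$, let $m_1=\lceil 1/M(R_1)\rceil$, and for integers $m\ge m_1$ let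 $r_m=\sup\{r>0:M(r)<1/m\}$. Any sequence $(r_m)_{m\ge m_1}$ so obtained is called an $\alpha$-sequence at $x$. *)

From HB Require Import structures.
From mathcomp Require Import all_boot all_order all_algebra.
From mathcomp Require Import all_classical all_reals all_analysis.
Set Implicit Arguments. Unset Strict Implicit. Unset Printing Implicit Defensive.
Import Order.TTheory GRing.Theory Num.Theory.
Import numFieldNormedType.Exports.
Local Open Scope classical_set_scope.
Local Open Scope ring_scope.

Definition is_metric (R : realType) (X : Type) (dist : X -> X -> R) :=
  [/\ forall x y, 0 <= dist x y,
      forall x y, dist x y = 0 <-> x = y,
      forall x y, dist x y = dist y x &
      forall x y z, dist x z <= dist x y + dist y z].

Definition metric_open (R : realType) (X : Type) (dist : X -> X -> R) (A : set X) :=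
  forall a, A a -> exists e : R, 0 < e /\ [set y | dist a y < e] `<=` A.

Definition borel_for (R : realType) (d : measure_display) (X : measurableType d)
  (dist : X -> X -> R) :=
  (@measurable d X) = <<s metric_open dist >>.

Definition cball (R : realType) (X : Type) (dist : X -> X -> R) (x : X) (r : R) :
  set X := [set y | dist x y <= r].

Section defs.
Context (R : realType) (d : measure_display) (X : measurableType d)
  (dist : X -> X -> R) (mu : {measure set X -> \bar R}) (eta : X -> R) (x : X).

Definition dev_int (r : R) : \bar R :=
  (\int[mu]_(y in cball dist x r) (`|eta y - eta x|)%:E)%E.

Definition avg_dev (r : R) : R := fine (dev_int r) / fine (mu (cball dist x r)).

Definition lebesgue_point : Prop := avg_dev r @[r --> 0^'+] --> 0.

Definition lebesgue_point_along (rho : nat -> R) : Prop :=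
  [/\ forall m, 0 < rho m, rho @ \oo --> 0 & (fun m => avg_dev (rho m)) @ \oo --> 0].

Definition Mfun (alpha r : R) : \bar R :=
  (poweR (dev_int r) alpha * poweR (mu (cball dist x r)) (1 - alpha))%E.

Definition m_one (alpha R1 : R) : nat := `|Num.ceil (fine (Mfun alpha R1))^-1|%N.

Definition r_seq (alpha : R) (m : nat) : R :=
  sup [set r : R | 0 < r /\ (Mfun alpha r < (m%:R^-1)%:E)%E].

(* (r_m)_{m >= m_1} is an alpha-sequence at x (for radius Rad), re-indexed from 0:
   the returned sequence n |-> r_{n + m_1} *)
Definition is_alpha_sequence (alpha Rad : R) (rho : nat -> R) : Prop :=
  exists R1 : R, [/\ 0 < R1, R1 < Rad, (Mfun alpha R1 < Mfun alpha Rad)%E &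
    rho = (fun n => r_seq alpha (n + m_one alpha R1)%N)].

End defs.

From HB Require Import structures.
From mathcomp Require Import all_boot all_order all_algebra.
From mathcomp Require Import all_classical all_reals all_analysis.
From mathcomp Require Import measurable_realfun lra.
Import Order.TTheory GRing.Theory Num.Theory.
Import numFieldNormedType.Exports.
Local Open Scope classical_set_scope.
Local Open Scope ring_scope.

(* Write V(r) = mu(B_r) and I(r) = \int_{B_r} |eta - eta(x)| dmu, so that the average
   deviation at radius r is I(r)/V(r) and M(r) = I(r)^a V(r)^(1-a).
   1. I(r) = nu(B_r) for the measure nu(A) = \int_A |eta - eta(x)| dmu.  Both V and I are
      nondecreasing, positive and finite on ]0, Rad], and continuous from above along closed
      balls; moreover V(r) -> mu({x}) = 0 as r -> 0.
   2. Hence M is nondecreasing, right-continuous and tends to 0 at 0, so an alpha-sequence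
      satisfies 0 < r_m <= R1, M < 1/m on ]0, r_m[, M(r_m) >= 1/m, and r_m -> 0.
   3. If r_(m+1) <= t < r_m then M(t) <= 1/m <= 2/(m+1) <= 2 M(r_(m+1)), which together with
      V(r_(m+1)) <= V(t) gives I(t)/V(t) <= 2^(1/a) I(r_(m+1))/V(r_(m+1)).
   A Lebesgue point is a Lebesgue point along any positive sequence tending to 0, in
   particular along (r_m); conversely every small t lies in some [r_(m+1), r_m[, and 3.
   transfers the convergence along (r_m) to the limit t -> 0+. *)

Lemma powR_cvg_seq (R : realType) (u : R^nat) (b p : R) : 0 < b ->
  u @ \oo --> b -> (fun k => powR (u k) p) @ \oo --> powR b p.
Proof.
move=> b0 ub.
have powR_cont : {for b, continuous (fun y : R => powR y p)}.
  apply: differentiable_continuous; apply/derivable1_diffP.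
  by have [] := is_derive1_powR p b0.
exact: (continuous_cvg _ powR_cont ub).
Qed.

Lemma ratio_le_of_powR_le (R : realType) (a c i1 v1 i2 v2 : R) :
  0 < a -> 0 < c -> 0 < i1 -> 0 < v1 -> 0 < i2 -> 0 < v2 -> v2 <= v1 ->
  powR i1 a * powR v1 (1 - a) <= c * (powR i2 a * powR v2 (1 - a)) ->
  i1 / v1 <= powR c a^-1 * (i2 / v2).
Proof.
move=> a0 c0 i10 v10 i20 v20 v21.
(* take logarithms: the hypothesis and the goal become linear in the ln's *)
have pos (y : R) : 0 < y -> y = expR (ln y) by move=> y0; rewrite lnK ?posrE.
rewrite /powR !gt_eqF // -!expRD.
rewrite [c in _ <= c * _](pos c) // -expRD ler_expR => hle.
rewrite (pos i1) // (pos v1) // (pos i2) // (pos v2) // -!expRB -expRD ler_expR.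
have hv : ln v2 <= ln v1 by rewrite ler_ln ?posrE.
have cancel_a : a * (a^-1 * ln c) = ln c by rewrite mulrA mulfV ?gt_eqF // mul1r.
rewrite -(ler_pM2l a0) [X in _ <= X]mulrDr cancel_a.
lra.
Qed.

Section abs_integral_measure.
Context {R : realType} {d : measure_display} {T : measurableType d}.
Variables (mu : {measure set T -> \bar R}) (f : T -> R).

Definition abs_integral (A : set T) : \bar R := (\int[mu]_(y in A) (`|f y|)%:E)%E.

Lemma abs_integral0 : abs_integral set0 = 0%E.
Proof. by rewrite /abs_integral integral_set0. Qed.

Lemma abs_integral_ge0 A : (0 <= abs_integral A)%E.
Proof. by apply: integral_ge0 => y _; rewrite lee_fin. Qed.

Lemma abs_integral_sigma_additive :
  measurable_fun setT f -> semi_sigma_additive abs_integral.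
Proof.
move=> mf F mF tF mUF.
have mabsf : measurable_fun (\bigcup_k F k) (fun y => (`|f y|)%:E : \bar R).
  by apply/measurable_funTS/measurable_EFinP; exact: measurableT_comp.
rewrite /abs_integral (ge0_integral_bigcup mu mF mabsf) //.
by apply: is_cvg_ereal_nneg_natsum_cond => n _ _; exact: abs_integral_ge0.
Qed.

End abs_integral_measure.

(* abs_integral tagged with the measurability proof that makes it a measure *)
Definition abs_integral_measure {R : realType} {d : measure_display}
  {T : measurableType d} (mu : {measure set T -> \bar R}) (f : T -> R)
  (mf : measurable_fun setT f) : set T -> \bar R := abs_integral mu f.

HB.instance Definition _ (R : realType) (d : measure_display) (T : measurableType d)
    (mu : {measure set T -> \bar R}) (f : T -> R) (mf : measurable_fun setT f) :=
  isMeasure.Build _ _ _ (abs_integral_measure mu f mf)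
    (abs_integral0 mu f) (abs_integral_ge0 mu f) (abs_integral_sigma_additive mu f mf).

Section metric_balls.
Context {R : realType} {d : measure_display} {X : measurableType d}.
Variables (dist : X -> X -> R) (x : X).
Hypothesis metric : is_metric dist.
Hypothesis borel : borel_for dist.

Local Notation B := (cball dist x).

(* closed balls are closed, hence Borel *)
Lemma cball_measurable r : measurable (B r).
Proof.
case: metric => _ _ dist_sym dist_tri; rewrite borel.
rewrite -(setCK (B r)); apply: sigma_algebraC; apply: sub_sigma_algebra => a /=.
move=> /negP; rewrite -ltNge => ra.
exists (dist x a - r); split; first by rewrite subr_gt0.
move=> y /= ay; apply/negP; rewrite -ltNge.
have := dist_tri x y a; rewrite (dist_sym y a) => tri.
by rewrite -(ltrD2r (dist a y)); apply: lt_le_trans tri; rewrite -ltrBrDl.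
Qed.

Lemma cball0 : B 0 = [set x].
Proof.
case: metric => dist_ge0 dist_eq0 _ _; apply/seteqP; split => y /=.
  by move=> h; apply/esym/dist_eq0/le_anti; rewrite h dist_ge0.
by move=> ->; rewrite /cball /= (proj2 (dist_eq0 x x) erefl).
Qed.

Lemma cball_measure_le (m : {measure set X -> \bar R}) {r s : R} :
  r <= s -> (m (B r) <= m (B s))%E.
Proof.
move=> rs; apply: le_measure; rewrite ?inE; try exact: cball_measurable.
by move=> y /= yr; apply: le_trans rs.
Qed.

Lemma cball_measure_fine (m : {measure set X -> \bar R}) {r s : R} :
  (m (B s) < +oo)%E -> r <= s -> m (B r) = (fine (m (B r)))%:E.
Proof.
move=> ms rs; rewrite fineK // ge0_fin_numE //.
exact: le_lt_trans (cball_measure_le m rs) ms.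
Qed.

Definition radii_above (s t : R) (k : nat) : R := s + (t - s) * k.+1%:R^-1.

Lemma radii_above_ge s t k : s <= t -> s <= radii_above s t k.
Proof. by move=> st; rewrite /radii_above lerDl mulr_ge0 // subr_ge0. Qed.

Lemma radii_above_gt s t k : s < t -> s < radii_above s t k.
Proof. by move=> st; rewrite /radii_above ltrDl mulr_gt0 ?subr_gt0 ?invr_gt0. Qed.

Lemma radii_above_le s t k : s <= t -> radii_above s t k <= t.
Proof.
move=> st; rewrite /radii_above -lerBrDl ler_piMr ?subr_ge0 //.
by rewrite invf_le1 // ler1n.
Qed.

Lemma radii_above_lt s t k : s < t -> radii_above s t k.+1 < t.
Proof.
move=> st; rewrite /radii_above -ltrBrDl gtr_pMr ?subr_gt0 //.
by rewrite invf_lt1 // ltr1n.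
Qed.

(* continuity from above of a measure, finite on B t, along closed balls *)
Lemma cball_measure_cvg (m : {measure set X -> \bar R}) {s t : R} :
  (m (B t) < +oo)%E -> s < t ->
  (fun k => fine (m (B (radii_above s t k)))) @ \oo --> fine (m (B s)).
Proof.
move=> mt st.
have capB : \bigcap_k B (radii_above s t k) = B s.
  apply/seteqP; split => y /=; last first.
    by move=> ys k _; apply: le_trans ys _; exact/radii_above_ge/ltW.
  move=> yB; rewrite /cball /= leNgt; apply/negP => sy.
  have e0 : 0 < (dist x y - s) / (t - s) by rewrite divr_gt0 // subr_gt0.
  have [N _ /(_ N (leqnn N)) /= hN] := near_infty_natSinv_lt (PosNum e0).
  have := yB N I; rewrite /cball /= /radii_above -lerBlDl.
  by rewrite leNgt mulrC -ltr_pdivlMr ?subr_gt0 // hN.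
have decrB : nonincreasing_seq (fun k => B (radii_above s t k)).
  move=> n k nk; apply/subsetPset => y /= yB; apply: le_trans yB _.
  rewrite /radii_above lerD2l ler_wpM2l ?subr_ge0 ?(ltW st) //.
  by rewrite lef_pV2 ?ler_nat ?posrE.
have t0_fin : (m (B (radii_above s t 0)) < +oo)%E.
  apply: le_lt_trans (cball_measure_le m _) mt.
  by rewrite /radii_above divr1 addrC subrK.
have := nonincreasing_cvg_mu t0_fin (fun k => cball_measurable _) _ decrB.
rewrite capB (cball_measure_fine m mt (ltW st)) => /(_ (cball_measurable s)).
exact: fine_cvg.
Qed.

End metric_balls.

Lemma invn_le_twice_invSn {F : realFieldType} {m : nat} : (0 < m)%N ->
  m%:R^-1 <= 2 * m.+1%:R^-1 :> F.
Proof.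
move=> m0; rewrite -[2 * _]/(2 / m.+1%:R) -invf_div.
rewrite lef_pV2 ?posrE ?divr_gt0 ?ltr0n //.
by rewrite ler_pdivrMr // -natrM ler_nat muln2 -addnn -addn1 leq_add2l.
Qed.

Lemma bracket_cvg0 {F : realFieldType} {u : F^nat} {N : nat} {t : F} :
  u @ \oo --> 0 -> 0 < t -> t < u N -> exists2 n, (N <= n)%N & u n.+1 <= t < u n.
Proof.
move=> u0 t0 tN.
have [M _ uM] := cvgr_lt _ u0 _ t0.
have ex_below : exists k, (N <= k)%N && (u k <= t).
  by exists (maxn N M); rewrite leq_maxl /= ltW // uM //= leq_maxr.
case: (ex_minnP ex_below) => -[|n] /andP[Nk ukt] kmin.
  by move: Nk; rewrite leqn0 => /eqP N0; move: tN; rewrite N0 ltNge ukt.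
have Nn : (N <= n)%N.
  rewrite leq_eqVlt in Nk; case/orP: Nk => [/eqP Nn | //].
  by move: tN; rewrite Nn ltNge ukt.
exists n => //; rewrite ukt /= ltNge; apply/negP => unt.
by have := kmin n; rewrite Nn unt ltnn => /(_ isT).
Qed.

Section lebesgue_point_alpha.
Context {R : realType} {d : measure_display} {X : measurableType d}.
Variables (dist : X -> X -> R) (mu : {measure set X -> \bar R}) (eta : X -> R).
Variables (x : X) (Rad : R).
Hypothesis metric : is_metric dist.
Hypothesis borel : borel_for dist.
Hypothesis eta_measurable : measurable_fun setT eta.
Hypothesis ball_gt0 : forall r, 0 < r -> (0 < mu (cball dist x r))%E.
Hypothesis Rad_gt0 : 0 < Rad.
Hypothesis ball_Rad_fin : (mu (cball dist x Rad) < +oo)%E.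
Hypothesis eta_Rad_fin : (\int[mu]_(y in cball dist x Rad) (`|eta y|)%:E < +oo)%E.
Hypothesis no_atom : mu [set x] = 0%E.
Hypothesis dev_int_gt0 : forall r, 0 < r -> (0 < dev_int dist mu eta x r)%E.

Local Notation B := (cball dist x).

Local Notation B_measurable := (cball_measurable dist x metric borel).
Local Notation B_measure_le := (cball_measure_le dist x metric borel).
Local Notation B_measure_fine := (cball_measure_fine dist x metric borel).
Local Notation B_measure_cvg := (cball_measure_cvg dist x metric borel).

Let dev_measurable : measurable_fun setT (fun y => eta y - eta x).
Proof. exact: measurable_funB eta_measurable (measurable_cst _). Qed.

(* nu A = \int_A |eta - eta(x)| dmu, so that dev_int r = nu (B r) *)
Let nu : {measure set X -> \bar R} := abs_integral_measure mu _ dev_measurable.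

Let nu_Rad_fin : (nu (B Rad) < +oo)%E.
Proof.
have mBRad := B_measurable Rad.
have mu_Rad_fin_num : mu (B Rad) \is a fin_num by rewrite ge0_fin_numE.
have abs_eta_mf : measurable_fun (B Rad) (fun y => (`|eta y|)%:E : \bar R).
  by apply/measurable_EFinP/measurableT_comp/measurable_funTS.
have triangle : (\int[mu]_(y in B Rad) (`|eta y - eta x|)%:E <=
    \int[mu]_(y in B Rad) ((`|eta y|)%:E + (`|eta x|)%:E))%E.
  apply: ge0_le_integral => //.
  - by apply/measurable_EFinP/measurableT_comp/measurable_funTS.
  - exact: emeasurable_funD.
  - by move=> y _; exact: ler_normB.
apply: le_lt_trans triangle _.
rewrite ge0_integralD // ?integral_cst //; try by move=> y _; rewrite lee_fin.
by rewrite lte_add_pinfty // -(fineK mu_Rad_fin_num) -EFinM ltry.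
Qed.

Lemma dev_intE r : dev_int dist mu eta x r = nu (B r).
Proof. by []. Qed.

Definition vol (r : R) : R := fine (mu (B r)).
Definition mass (r : R) : R := fine (nu (B r)).

Lemma avg_devE r : avg_dev dist mu eta x r = mass r / vol r.
Proof. by []. Qed.

Lemma avg_dev_ge0 r : 0 <= avg_dev dist mu eta x r.
Proof. by rewrite avg_devE divr_ge0 // fine_ge0. Qed.

Lemma vol_fin r : r <= Rad -> mu (B r) = (vol r)%:E.
Proof. exact: B_measure_fine. Qed.

Lemma mass_fin r : r <= Rad -> nu (B r) = (mass r)%:E.
Proof. exact: B_measure_fine. Qed.

Lemma vol_gt0 r : 0 < r -> r <= Rad -> 0 < vol r.
Proof. by move=> r0 rRad; have := ball_gt0 r r0; rewrite vol_fin. Qed.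

Lemma mass_gt0 r : 0 < r -> r <= Rad -> 0 < mass r.
Proof.
by move=> r0 rRad; have := dev_int_gt0 r r0; rewrite dev_intE mass_fin.
Qed.

Lemma vol_le r s : r <= s -> s <= Rad -> vol r <= vol s.
Proof.
move=> rs sRad; have := B_measure_le mu rs.
by rewrite !vol_fin ?(le_trans rs).
Qed.

Lemma mass_le r s : r <= s -> s <= Rad -> mass r <= mass s.
Proof.
move=> rs sRad; have := B_measure_le nu rs.
by rewrite !mass_fin ?(le_trans rs).
Qed.

(* M(r), as a real number, for r <= Rad *)
Definition Mval (a r : R) : R := powR (mass r) a * powR (vol r) (1 - a).

Lemma MfunE a r : r <= Rad -> Mfun dist mu eta x a r = (Mval a r)%:E.
Proof.
by move=> rRad; rewrite /Mfun dev_intE mass_fin // vol_fin // !poweR_EFin -EFinM.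
Qed.

Lemma Mfun_le a {r s : R} : 0 <= a <= 1 -> r <= s ->
  (Mfun dist mu eta x a r <= Mfun dist mu eta x a s)%E.
Proof.
move=> /andP[a0 a1] rs; rewrite /Mfun !dev_intE.
apply: lee_pmul; try exact: poweR_ge0.
- apply: gt0_ler_poweR => //; rewrite ?in_itv /= ?measure_ge0 ?leey //.
  exact: (B_measure_le nu).
- apply: gt0_ler_poweR; rewrite ?subr_ge0 // ?in_itv /= ?measure_ge0 ?leey //.
  exact: B_measure_le.
Qed.

Lemma Mval_gt0 a {r : R} : 0 < r -> r <= Rad -> 0 < Mval a r.
Proof. by move=> r0 rRad; rewrite mulr_gt0 // powR_gt0 ?mass_gt0 ?vol_gt0. Qed.

(* M is right-continuous on ]0, Rad[, by continuity from above of mu and nu *)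
Lemma Mval_cvg_above a {s : R} : 0 < s -> s < Rad ->
  (fun k => Mval a (radii_above s Rad k)) @ \oo --> Mval a s.
Proof.
move=> s0 sRad; apply: cvgM; apply: powR_cvg_seq.
- exact: mass_gt0 (ltW sRad).
- exact: (B_measure_cvg nu nu_Rad_fin sRad).
- exact: vol_gt0 (ltW sRad).
- exact: (B_measure_cvg mu ball_Rad_fin sRad).
Qed.

(* M(r) tends to 0 with r, since the balls shrink to the null set {x} *)
Lemma Mfun_small {a c : R} : 0 < a < 1 -> 0 < c ->
  exists r, [/\ 0 < r, r < Rad & (Mfun dist mu eta x a r < c%:E)%E].
Proof.
move=> /andP[a0 a1] c0; pose t k := radii_above 0 Rad k.
have t_gt0 k : 0 < t k by exact: radii_above_gt.
have t_le k : t k <= Rad by exact/radii_above_le/ltW.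
have vol_t0 : (fun k => vol (t k)) @ \oo --> 0.
  have := B_measure_cvg mu ball_Rad_fin Rad_gt0.
  by rewrite cball0 // no_atom.
have pow_vol_t0 : (fun k => powR (vol (t k)) (1 - a)) @ \oo --> 0.
  have := @powR_cvg0 R (1 - a); rewrite subr_gt0 => /(_ a1) /cvg_at_rightP.
  by apply; split => // k; exact: vol_gt0.
pose K := powR (mass Rad) a.
have Mval_t_le k : Mval a (t k) <= K * powR (vol (t k)) (1 - a).
  apply: ler_wpM2r; first exact: powR_ge0.
  by apply: ge0_ler_powR; rewrite ?nnegrE ?fine_ge0 ?(ltW a0) ?mass_le.
have bound_t0 : (fun k => K * powR (vol (t k)) (1 - a)) @ \oo --> 0.
  by rewrite -(mulr0 K); apply: cvgM => //; exact: cvg_cst.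
have [N _ hN] := cvgr_lt _ bound_t0 _ c0.
exists (t N.+1); split => //; first exact: radii_above_lt.
by rewrite MfunE // lte_fin; apply: le_lt_trans (Mval_t_le _) (hN _ (leqnSn N)).
Qed.


Section alpha_sequence.
Context {a R1 : R}.
Hypotheses (a_gt0 : 0 < a) (a_lt1 : a < 1) (R1_gt0 : 0 < R1) (R1_lt_Rad : R1 < Rad).

Local Notation M := (Mfun dist mu eta x a).
Local Notation m1 := (m_one dist mu eta x a R1).
Local Notation r_ := (r_seq dist mu eta x a).
Local Notation level m := [set r : R | 0 < r /\ (M r < (m%:R^-1)%:E)%E].

Let a_01 : 0 <= a <= 1. Proof. by rewrite !ltW. Qed.
Let a_01_strict : 0 < a < 1. Proof. by rewrite a_gt0 a_lt1. Qed.
Let R1_le_Rad : R1 <= Rad. Proof. exact: ltW. Qed.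

Lemma m_one_spec {m : nat} : (m1 <= m)%N -> 0 < m%:R :> R /\ m%:R^-1 <= Mval a R1.
Proof.
move=> m1m.
have MR1_gt0 : 0 < Mval a R1 by apply: Mval_gt0.
have inv_gt0 : 0 < (Mval a R1)^-1 by rewrite invr_gt0.
have m1_ge : (Mval a R1)^-1 <= m1%:R.
  have ceil_ge0 : (0 <= Num.ceil (Mval a R1)^-1)%R.
    by rewrite -(ler_int R) (le_trans (ltW inv_gt0) (ceil_ge _)).
  by rewrite /m_one MfunE // natr_absz ger0_norm // ceil_ge.
have m_ge : (Mval a R1)^-1 <= m%:R by apply: le_trans m1_ge _; rewrite ler_nat.
have m0 : 0 < m%:R :> R by apply: lt_le_trans m_ge.
by split => //; rewrite invf_ple ?posrE.
Qed.

Lemma m_one_gt0 : (0 < m1)%N.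
Proof. by have [] := m_one_spec (leqnn m1); rewrite ltr0n. Qed.

Lemma level_ub {m : nat} {e : R} :
  e <= Rad -> m%:R^-1 <= Mval a e -> ubound (level m) e.
Proof.
move=> eRad me r [r0 Mr]; rewrite leNgt; apply/negP => er.
have := Mfun_le a a_01 (ltW er); rewrite MfunE // => Me.
by have := le_lt_trans Me Mr; rewrite lte_fin ltNge me.
Qed.

Lemma level_neq0 {m : nat} : (m1 <= m)%N -> level m !=set0.
Proof.
move=> m1m; have [m0 _] := m_one_spec m1m.
have minv_gt0 : 0 < m%:R^-1 :> R by rewrite invr_gt0.
have [r [r0 _ Mr]] := Mfun_small a_01_strict minv_gt0.
by exists r.
Qed.

Lemma level_has_ub {m : nat} : (m1 <= m)%N -> has_ubound (level m).
Proof. by move=> m1m; exists R1; apply: level_ub R1_le_Rad (m_one_spec m1m).2. Qed.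

Lemma r_seq_gt0 {m : nat} : (m1 <= m)%N -> 0 < r_ m.
Proof.
move=> m1m; have [r [r0 Mr]] := level_neq0 m1m.
exact: lt_le_trans r0 (ub_le_sup (level_has_ub m1m) (conj r0 Mr)).
Qed.

Lemma r_seq_le {m : nat} {e : R} :
  (m1 <= m)%N -> e <= Rad -> m%:R^-1 <= Mval a e -> r_ m <= e.
Proof. by move=> m1m eRad me; apply: ge_sup (level_neq0 m1m) (level_ub eRad me). Qed.

Lemma r_seq_lt_Rad {m : nat} : (m1 <= m)%N -> r_ m < Rad.
Proof.
move=> m1m; apply: le_lt_trans (r_seq_le m1m R1_le_Rad _) R1_lt_Rad.
exact: (m_one_spec m1m).2.
Qed.

Lemma Mfun_below_r_seq {m : nat} {r : R} :
  (m1 <= m)%N -> r < r_ m -> (M r < (m%:R^-1)%:E)%E.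
Proof.
move=> m1m rm; have [s [_ Ms] rs] := sup_gt (level_neq0 m1m) rm.
exact: le_lt_trans (Mfun_le a a_01 (ltW rs)) Ms.
Qed.

(* by right continuity, M reaches the level 1/m at r_m *)
Lemma Mfun_r_seq {m : nat} : (m1 <= m)%N -> ((m%:R^-1)%:E <= M (r_ m))%E.
Proof.
move=> m1m; set s := r_ m.
have s0 : 0 < s := r_seq_gt0 m1m.
have sRad : s < Rad := r_seq_lt_Rad m1m.
rewrite MfunE ?(ltW sRad) // lee_fin leNgt; apply/negP => Ms.
have [N _ hN] := cvgr_lt _ (Mval_cvg_above a s0 sRad) _ Ms.
pose t := radii_above s Rad N.
have st : s < t by exact: radii_above_gt.
have level_t : level m t.
  split; first exact: lt_trans st.
  by rewrite MfunE ?radii_above_le ?(ltW sRad) // lte_fin; exact: hN N (leqnn N).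
by have := ub_le_sup (level_has_ub m1m) level_t; rewrite leNgt st.
Qed.

(* r_m -> 0, since M(e) > 0 exceeds the level 1/m for large m *)
Lemma r_seq_cvg0 : (fun n => r_ (n + m1)) @ \oo --> 0.
Proof.
apply/cvgrPdist_le => eps eps0.
pose e := Num.min eps Rad.
have e0 : 0 < e by rewrite lt_min eps0 Rad_gt0.
have eRad : e <= Rad by rewrite ge_min lexx orbT.
have [N _ hN] := near_infty_natSinv_lt (PosNum (Mval_gt0 a e0 eRad)).
exists N => // n /= Nn; have m1m : (m1 <= n + m1)%N := leq_addl _ _.
rewrite sub0r normrN ger0_norm ?(ltW (r_seq_gt0 m1m)) //.
have r_le_e : r_ (n + m1) <= e.
  apply: (r_seq_le m1m eRad); apply: le_trans (ltW (hN n Nn)).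
  rewrite lef_pV2 ?posrE ?ltr0n ?addn_gt0 ?m_one_gt0 ?orbT //.
  by rewrite ler_nat -addn1 leq_add2l m_one_gt0.
by apply: le_trans r_le_e _; rewrite ge_min lexx.
Qed.

Lemma avg_dev_between {m : nat} {t : R} : (m1 <= m)%N -> r_ m.+1 <= t < r_ m ->
  avg_dev dist mu eta x t <= powR 2 a^-1 * avg_dev dist mu eta x (r_ m.+1).
Proof.
move=> m1m /andP[st tm]; have m1Sm := leqW m1m.
have s0 := r_seq_gt0 m1Sm.
have t0 : 0 < t := lt_le_trans s0 st.
have tRad : t <= Rad := ltW (lt_trans tm (r_seq_lt_Rad m1m)).
have sRad : r_ m.+1 <= Rad := le_trans st tRad.
have Mt : Mval a t <= m%:R^-1.
  by have := Mfun_below_r_seq m1m tm; rewrite MfunE // lte_fin => /ltW.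
have Ms : m.+1%:R^-1 <= Mval a (r_ m.+1).
  by have := Mfun_r_seq m1Sm; rewrite MfunE // lee_fin.
rewrite !avg_devE; apply: ratio_le_of_powR_le;
  rewrite ?mass_gt0 ?vol_gt0 ?vol_le //.
rewrite -/(Mval a t) -/(Mval a (r_ m.+1)); apply: le_trans Mt _.
apply: le_trans (invn_le_twice_invSn (leq_trans m_one_gt0 m1m)) _.
by rewrite ler_pM2l.
Qed.

(* convergence along (r_m) gives convergence as t -> 0+, by bracketing t *)
Lemma lebesgue_point_of_along :
  lebesgue_point_along dist mu eta x (fun n => r_ (n + m1)) ->
  lebesgue_point dist mu eta x.
Proof.
case=> _ _ avg_cvg; apply/cvgrPdist_lt => e e0.
have K0 : 0 < powR 2 a^-1 by rewrite powR_gt0.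
have /cvgrPdist_lt/(_ _ (divr_gt0 e0 K0)) [N _ hN] := avg_cvg.
near=> t.
have t0 : 0 < t by near: t; exact: nbhs_right_gt.
have tN : t < r_ (N + m1) by near: t; exact/nbhs_right_lt/r_seq_gt0/leq_addl.
have [n Nn /andP[tn1 tn]] := bracket_cvg0 r_seq_cvg0 t0 tN.
rewrite /= addSn in tn1.
rewrite sub0r normrN ger0_norm ?avg_dev_ge0 //.
apply: le_lt_trans (avg_dev_between (leq_addl n m1) _) _; first by rewrite tn1 tn.
rewrite mulrC -ltr_pdivlMr //.
by have := hN n.+1 (leqW Nn); rewrite sub0r normrN ger0_norm ?avg_dev_ge0 // addSn.
Unshelve. all: by end_near.
Qed.

(* (r_m) is a positive sequence tending to 0 *)
Lemma along_of_lebesgue_point : lebesgue_point dist mu eta x ->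
  lebesgue_point_along dist mu eta x (fun n => r_ (n + m1)).
Proof.
move=> lp; have r_gt0 n : 0 < r_ (n + m1) := r_seq_gt0 (leq_addl n m1).
split => //; first exact: r_seq_cvg0.
by move/cvg_at_rightP : lp; apply; split => //; exact: r_seq_cvg0.
Qed.

End alpha_sequence.

Lemma lebesgue_point_alphaP : lebesgue_point dist mu eta x <->
  exists alpha : R, [/\ 0 < alpha, alpha < 1 &
    exists rho : nat -> R,
      is_alpha_sequence dist mu eta x alpha Rad rho /\ lebesgue_point_along dist mu eta x rho].
Proof.
split=> [lp | [a [a0 a1 [rho [[R1 [R10 R1Rad _ ->] along]]]]]]; last first.
  exact: lebesgue_point_of_along along.
(* any exponent works; take a = 1/2 and R1 < Rad with M(R1) < M(Rad) *)
have half : 0 < (2^-1 : R) < 1 by apply/andP; split; lra.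
have [R1 [R10 R1Rad MR1]] := Mfun_small half (Mval_gt0 2^-1 Rad_gt0 (lexx Rad)).
case/andP: half => half0 half1; exists 2^-1; split => //.
exists (fun n => r_seq dist mu eta x 2^-1 (n + m_one dist mu eta x 2^-1 R1)).
split; last exact: along_of_lebesgue_point.
by exists R1; split; rewrite // (MfunE _ Rad).
Qed.

End lebesgue_point_alpha.

Theorem mainTheorem14 (R : realType) (d : measure_display) (X : measurableType d)
  (dist : X -> X -> R) (mu : {measure set X -> \bar R}) (eta : X -> R)
  (x : X) (Rad : R) :
  is_metric dist ->
  borel_for dist ->
  measurable_fun setT eta ->
  (forall r : R, 0 < r -> (0 < mu (cball dist x r))%E) ->
  0 < Rad ->
  (mu (cball dist x Rad) < +oo)%E ->
  (\int[mu]_(y in cball dist x Rad) (`|eta y|)%:E < +oo)%E ->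
  mu [set x] = 0%E ->
  (forall r : R, 0 < r -> (0 < dev_int dist mu eta x r)%E) ->
  lebesgue_point dist mu eta x <->
  exists alpha : R, [/\ 0 < alpha, alpha < 1 &
    exists rho : nat -> R,
      is_alpha_sequence dist mu eta x alpha Rad rho /\ lebesgue_point_along dist mu eta x rho].
Proof.
move=> *; exact: lebesgue_point_alphaP.
Qed.
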